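(* Let $\theta$ be a $\mathbb C$-linear operator on $\Lambda$. Then $E^a\theta=\theta E^a$ for all $a\in\mathbb C$ if and only if $\theta$ is a complex formal power series in the iterated symmetric derivatives $\mathbf D_1,\mathbf D_2,\dots$. That is, if and only if there are complex numbers $c_k$, indexed by finitely supported sequences $k=(k_1,k_2,\dots)$ of nonnegative integers, such that $\theta p=\sum_k c_k\mathbf D_1^{k_1}\mathbf D_2^{k_2}\cdots p$ for every $p\in\Lambda$.
   Context: $\Lambda$ is the algebra of symmetric functions with complex coefficients in the variables $\mathbf y=(y_1,y_2,\dots)$, with basis the monomial symmetric functions $m_\lambda(\mathbf y)$, $\lambda$ ranging over partitions. For $i\ge1$, the $i$-th symmetric derivative $\mathbf D_i$ is the linear operator on $\Lambda$ given by: - $\mathbf D_i m_\lambda=i!\,m_{\lambda\setminus i}$ if $i$ is a part of $\lambda$, where $\lambda\setminus i$ removes one part equal to $i$; - $\mathbf D_i m_\lambda=0$ otherwise. For $a\in\mathbb C$, the symmetric shift $E^a$ is the operator $E^ap(y_1,y_2,\dots)=p(a,y_1,y_2,\dots)$. For each $p$ only finitely many terms of the formal series act nonzero, so the series is well defined. *)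

From HB Require Import structures.
From mathcomp Require Import all_boot all_order all_algebra.
From mathcomp Require Import reals.
From mathcomp Require Import complex.
From mathcomp Require Import finmap.
From mathcomp.multinomials Require Import monalg.
From Stdlib Require Import ClassicalEpsilon.

Set Implicit Arguments.
Unset Strict Implicit.
Unset Printing Implicit Defensive.
Import GRing.Theory Num.Theory.
Local Open Scope ring_scope.

Definition is_part (s : seq nat) : bool :=
  sorted geq s && all (fun x => 0 < x)%N s.

Record partition := Part { pval :> seq nat; pvalP : is_part pval }.
HB.instance Definition _ := [isSub for pval].
HB.instance Definition _ := [Countable of partition by <:].

Lemma topart_proof (s : seq nat) :
  is_part (sort geq [seq x <- s | (0 < x)%N]).
Proof.
apply/andP; split.
  apply: sort_sorted => x y; exact: leq_total.
by rewrite all_sort; apply/allP => x; rewrite mem_filter => /andP[].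
Qed.

Definition topart (s : seq nat) : partition := Part (topart_proof s).

(* The ring of symmetric functions Λ over ℂ, as the free ℂ-vector space
   with basis the monomial symmetric functions m_λ (λ a partition):
   an element p is the finitely supported coefficient map λ ↦ p@_λ,
   i.e. p = Σ_λ p@_λ m_λ.  ℂ is modelled as R[i] for an arbitrary
   R : realType (every realType is isomorphic to ℝ). *)
Definition Lam (R : realType) := {malg R[i][partition]}.

(* m_λ(y_1,…,y_n): sum over all distinct rearrangements α of λ padded
   with zeros to length n of y^α (zero if λ has more than n parts). *)
Definition m_eval (R : realType) (la : partition) (ys : seq R[i]) : R[i] :=
  if (size la <= size ys)%N then
    \sum_(al <- permutations (pval la ++ nseq (size ys - size la) 0%N))
       \prod_(j < size ys) ys`_j ^+ nth 0%N al j
  else 0.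

(* p(y_1,…,y_n) = Σ_λ p@_λ m_λ(y_1,…,y_n): specialization of p to
   finitely many variables (the others set to 0). *)
Definition ev (R : realType) (p : Lam R) (ys : seq R[i]) : R[i] :=
  \sum_(la <- msupp p) p@_la * m_eval la ys.

(* Symmetric shift: E^a p is the symmetric function q with
   q(y_1,y_2,…) = p(a,y_1,y_2,…), i.e. q(y_1..y_n) = p(a,y_1..y_n) for
   every n and every y (a symmetric function is determined by these
   finite-variable specializations). *)
Definition Eshift (R : realType) (a : R[i]) (p : Lam R) : Lam R :=
  epsilon (inhabits 0) (fun q : Lam R => forall ys, ev q ys = ev p (a :: ys)).

Definition Dsym (R : realType) (i : nat) (p : Lam R) : Lam R :=
  \sum_(la <- msupp p)
     (p@_la * (i`!)%:R) *: (if i \in pval la then << topart (rem i la) >> else 0).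

(* finitely supported sequences k = (k_1,k_2,…) of naturals, represented
   canonically as finite lists without trailing zeros *)
Definition canon (k : seq nat) : bool := last 1%N k != 0%N.

(* D^k p = D_1^{k_1} D_2^{k_2} ⋯ p *)
Definition Dpow (R : realType) (k : seq nat) (p : Lam R) : Lam R :=
  foldr (fun ik q => iter ik.2 (Dsym ik.1) q) p (zip (iota 1 (size k)) k).

From Pilot Require Import Defs.
From HB Require Import structures.
From mathcomp Require Import all_boot all_order all_algebra.
From mathcomp Require Import reals complex.
From mathcomp Require Import finmap.
From mathcomp.multinomials Require Import monalg.
From Stdlib Require Import ClassicalEpsilon.
From mathcomp Require Import zify.
Import GRing.Theory Num.Theory.
Local Open Scope ring_scope.

(* The symmetric derivatives act on coefficients by (D_i p)_ν = i! p_{ν ∪ i}, so they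
   commute, and peeling the first variable off m_λ gives the Taylor formula
   E^a = 1 + Σ_{i ≥ 1} a^i/i! D_i (an identity in Λ because a symmetric function is
   determined by its finite specializations).  Comparing coefficients of this polynomial
   in a, a linear θ commutes with every E^a iff it commutes with every D_i, and a series
   in the D_i does.  Conversely, if θ commutes with the D_i, applying D_μ = ∏_j D_{μ_j}
   and reading off the coefficient of m_∅ gives (θ p)_μ = Σ_λ p_{λ ∪ μ} (θ m_λ)_∅, which
   is the coefficient of m_μ in Σ_λ (θ m_λ)_∅ / λ! D_λ p, where λ! = ∏_j λ_j! and
   D_λ = D^k for the multiplicity sequence k of λ. *)

Set Implicit Arguments.
Unset Strict Implicit.
Unset Printing Implicit Defensive.

Local Notation partition := Defs.partition.

Lemma eq_big_nz_seq (T : eqType) (V : nmodType) (s1 s2 : seq T) (F : T -> V) :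
  uniq s1 -> uniq s2 ->
  {in s1, forall x, F x != 0 -> x \in s2} ->
  {in s2, forall x, F x != 0 -> x \in s1} ->
  \sum_(x <- s1) F x = \sum_(x <- s2) F x.
Proof.
move=> u1 u2 s12 s21.
have sum0 s : \sum_(x <- s | F x == 0) F x = 0 by rewrite big1 // => x /eqP.
rewrite (bigID [pred x | F x == 0]) [RHS](bigID [pred x | F x == 0]) /= !sum0 !add0r.
rewrite -big_filter -[RHS]big_filter; apply/perm_big/uniq_perm; rewrite ?filter_uniq //.
by move=> x; rewrite !mem_filter; apply/andP/andP => -[Fx xs]; split; auto.
Qed.

Lemma sum_expr_eq0 (C : numDomainType) (N : nat) (x : nat -> C) :
  (forall a : C, \sum_(j < N) x j * a ^+ j = 0) -> forall j, (j < N)%N -> x j = 0.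
Proof.
move=> vanish j ltjN.
have P0 : \poly_(j < N) x j = 0.
  apply: (@roots_geq_poly_eq0 _ _ [seq n%:R | n <- iota 0 N]).
  - by apply/allP => _ /mapP[n _ ->]; rewrite /root horner_poly vanish.
  - by rewrite map_inj_uniq ?iota_uniq // => m n /eqP; rewrite eqr_nat => /eqP.
  - by rewrite size_map size_iota size_poly.
by have := congr1 (fun q : {poly C} => q`_j) P0; rewrite coef_poly ltjN coef0.
Qed.

Lemma rem_cat (T : eqType) (x : T) (s1 s2 : seq T) :
  rem x (s1 ++ s2) = if x \in s1 then rem x s1 ++ s2 else s1 ++ rem x s2.
Proof.
elim: s1 => [|y s1 IH] //=; rewrite in_cons eq_sym.
by case: eqP => //= _; rewrite IH; case: (x \in s1).
Qed.

Lemma perm_rem (T : eqType) (x : T) (s t : seq T) :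
  perm_eq s t -> perm_eq (rem x s) (rem x t).
Proof. by move=> st; apply/permP => P; rewrite !count_rem (permP st) (perm_mem st). Qed.

Lemma sum_undup_iota (V : nmodType) (s : seq nat) (N : nat) (F : nat -> V) :
  {in s, forall x, x < N}%N ->
  \sum_(x <- undup s) F x = \sum_(i < N | (i : nat) \in s) F i.
Proof.
move=> ltsN; rewrite -(big_mkord (mem s)) -big_filter.
apply/perm_big/uniq_perm; rewrite ?undup_uniq ?filter_uniq ?iota_uniq // => x.
by rewrite mem_undup mem_filter mem_iota subn0 /=; case: (boolP (x \in s)) => // /ltsN ->.
Qed.

Lemma leq_mem_sumn (x : nat) (s : seq nat) : x \in s -> (x <= sumn s)%N.
Proof.
elim: s => [|y s IHs] //=; rewrite in_cons => /orP[/eqP-> | /IHs]; first exact: leq_addr.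
by move/leq_trans; apply; apply: leq_addl.
Qed.

Lemma undup_nseqS (T : eqType) (n : nat) (x : T) : undup (nseq n.+1 x) = [:: x].
Proof. by elim: n => [|n IHn] //=; rewrite in_cons eqxx; exact: IHn. Qed.

Lemma mcoeff_supp (K : choiceType) (G : nzRingType) (g : {malg G[K]}) (k : K) :
  g@_k = \sum_(l <- msupp g) g@_l * (l == k)%:R.
Proof.
rewrite {1}[g]monalgE raddf_sum; apply: eq_bigr => l _ /=.
by rewrite mcoeffU mulr_natr.
Qed.

Lemma monalgUZ (K : choiceType) (G : nzRingType) (c : G) (k : K) :
  << c *g k >> = c *: (<< k >> : {malg G[K]}).
Proof. by apply/malgP => l; rewrite mcoeffZ !mcoeffU mulr_natr. Qed.

Lemma msupp_neq0 (K : choiceType) (G : zmodType) (g : {malg G[K]}) :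
  g != 0 -> exists k, k \in msupp g.
Proof.
move=> g_neq0; apply/fset0Pn; apply: contra g_neq0 => /eqP supp0.
by apply/eqP/malgP => k; rewrite mcoeff0 mcoeff_outdom // supp0 in_fset0.
Qed.

Lemma sum_scale_expr_eq0 (K : choiceType) (C : numDomainType) (N : nat)
    (v : nat -> {malg C[K]}) :
  (forall a : C, \sum_(j < N) a ^+ j *: v j = 0) -> forall j, (j < N)%N -> v j = 0.
Proof.
move=> vanish j lt_jN; apply/malgP => k; rewrite mcoeff0.
apply: (@sum_expr_eq0 _ N (fun j => (v j)@_k)) lt_jN => a.
rewrite -[RHS](mcoeff0 k) -(vanish a) raddf_sum.
by apply: eq_bigr => i _ /=; rewrite mcoeffZ mulrC.
Qed.

Lemma fact_neq0 {C : numDomainType} (i : nat) : (i`!%:R : C) != 0.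
Proof. by rewrite pnatr_eq0 -lt0n fact_gt0. Qed.

Lemma prod_fact_neq0 {C : numDomainType} (l : seq nat) :
  \prod_(i <- l) (i`!%:R : C) != 0.
Proof. by rewrite prodf_seq_neq0; apply/allP => i _; apply: fact_neq0. Qed.

(** * Partitions *)

Local Notation pos := (fun x : nat => 0 < x)%N.

Lemma leq_size_sumn (s : seq nat) : all pos s -> (size s <= sumn s)%N.
Proof. by elim: s => [|y s IHs] //= /andP[y_gt0 /IHs]; rewrite -add1n; apply: leq_add. Qed.

Lemma part_pos (la : partition) : all pos la.
Proof. by case: la => s /= /andP[]. Qed.

Lemma part_sorted (la : partition) : sorted geq la.
Proof. by case: la => s /= /andP[]. Qed.

Lemma part_neq0 (la : partition) : (0 \notin pval la)%N.
Proof. by apply/negP => /(allP (part_pos la)). Qed.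

Lemma part_eq (la mu : partition) : perm_eq la mu -> la = mu.
Proof.
move=> perm_la_mu; apply/val_inj/(sorted_eq _ _ (part_sorted la) (part_sorted mu)) => //.
- by move=> x y z le_yx le_zy; apply: leq_trans le_zy le_yx.
- by move=> x y /anti_leq.
Qed.

Lemma topart_perm (s : seq nat) : perm_eq (topart s) [seq x <- s | pos x].
Proof. by rewrite /= perm_sort. Qed.

Lemma topart_eq (s : seq nat) (la : partition) :
  perm_eq [seq x <- s | pos x] la -> topart s = la.
Proof. by move=> perm_s_la; apply/part_eq/(perm_trans (topart_perm s)). Qed.

Lemma perm_topart (s t : seq nat) : perm_eq s t -> topart s = topart t.
Proof.
move=> st; apply/topart_eq/(perm_trans (perm_filter _ st)).
by rewrite perm_sym topart_perm.
Qed.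

Lemma perm_topart_pos (s : seq nat) : all pos s -> perm_eq (topart s) s.
Proof. by move=> /all_filterP s_pos; rewrite -[X in perm_eq _ X]s_pos topart_perm. Qed.

Lemma topartK (la : partition) : topart la = la.
Proof. by apply: topart_eq; rewrite (all_filterP (part_pos la)). Qed.

Lemma topart_catr (s t : seq nat) : topart (s ++ topart t) = topart (s ++ t).
Proof.
apply: topart_eq; rewrite perm_sym (perm_trans (topart_perm _)) //.
by rewrite !filter_cat (all_filterP (part_pos (topart t))) perm_cat2l perm_sym topart_perm.
Qed.

Lemma topart_catC (s t : seq nat) : topart (s ++ t) = topart (t ++ s).
Proof. by apply: perm_topart; rewrite perm_catC. Qed.

Lemma topart_catl (s t : seq nat) : topart (topart s ++ t) = topart (s ++ t).
Proof. by rewrite topart_catC topart_catr topart_catC. Qed.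

Lemma topart_cons_rem (i : nat) (la nu : partition) : (0 < i)%N ->
  (i \in pval la) && (topart (rem i la) == nu) = (la == topart (i :: nu)).
Proof.
move=> i_gt0; apply/andP/eqP => [[i_la /eqP <-] | ->].
  rewrite -cat1s topart_catr -[LHS]topartK; apply: perm_topart.
  exact: perm_to_rem.
have perm_inu : perm_eq (topart (i :: nu)) (i :: nu).
  by apply: perm_topart_pos; rewrite /= i_gt0 part_pos.
rewrite (perm_mem perm_inu) mem_head; split=> //.
by rewrite (perm_topart (perm_rem i perm_inu)) /= eqxx topartK.
Qed.

Lemma size_topart_rem (la : partition) (x : nat) : x \in pval la ->
  size (topart (rem x la)) = (size la).-1.
Proof.
move=> x_la; rewrite (perm_size (topart_perm _)) (all_filterP _) ?size_rem //.
by apply/allP => y /mem_rem; apply: (allP (part_pos la)).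
Qed.

Definition part0 : partition := @Part [::] isT.

(** * Symmetric derivatives *)

(* A locked copy of [Dsym]: unifying a term against the transparent defining
   sum over a finite map (as rewriting does) can take minutes. *)
Fact dsym_key : unit. Proof. by []. Qed.
Definition dsym (R : realType) := locked_with dsym_key (@Dsym R).

Lemma DsymE (R : realType) : @Dsym R = @dsym R.
Proof. by rewrite /dsym unlock. Qed.

Section SymmetricDerivative.
Variable R : realType.
Local Notation C := R[i].
Implicit Types (p q : Lam R) (la nu : partition).

Lemma dsym0 p : dsym 0 p = 0.
Proof.
by rewrite -DsymE /Dsym big1 // => la _; rewrite (negPf (part_neq0 la)) scaler0.
Qed.

Lemma mcoeff_dsym i p nu : (0 < i)%N ->
  (dsym i p)@_nu = i`!%:R * p@_(topart (i :: nu)).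
Proof.
move=> i_gt0; rewrite -DsymE raddf_sum (mcoeff_supp p) mulr_sumr.
apply: eq_bigr => la _ /=; rewrite mcoeffZ -topart_cons_rem // (fun_if (mcoeff nu)).
by rewrite mcoeffU mcoeff0; case: (i \in pval la); rewrite /= ?mulr0 // mulrAC mulrC.
Qed.

Lemma dsym_is_linear i : linear (@dsym R i).
Proof.
move=> c p q; have [->|i_gt0] := posnP i; first by rewrite !dsym0 scaler0 addr0.
apply/malgP => nu; rewrite mcoeff_dsym // !mcoeffD !mcoeffZ !mcoeff_dsym //.
by rewrite mulrDr mulrCA.
Qed.

HB.instance Definition _ i :=
  GRing.isLinear.Build C (Lam R) (Lam R) *:%R (@dsym R i) (@dsym_is_linear i).

Lemma dsymC i j p : dsym i (dsym j p) = dsym j (dsym i p).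
Proof.
have [->|i_gt0] := posnP i; first by rewrite !dsym0 linear0.
have [->|j_gt0] := posnP j; first by rewrite !dsym0 linear0.
apply/malgP => nu; rewrite !mcoeff_dsym // !mulrA [_ * j`!%:R]mulrC.
rewrite -[j :: topart _]cat1s -[i :: topart _]cat1s !topart_catr.
congr (_ * p@_ _); apply: perm_topart.
by apply/permPl; exact: (perm_catCA [:: j] [:: i]).
Qed.

Definition dseq (l : seq nat) p : Lam R := foldr (@dsym R) p l.

Lemma mcoeff_dseq l p nu : all pos l ->
  (dseq l p)@_nu = (\prod_(i <- l) i`!%:R) * p@_(topart (l ++ nu)).
Proof.
elim: l nu => [|i l IHl] nu /=; first by rewrite big_nil mul1r topartK.
case/andP=> i_gt0 l_pos; rewrite mcoeff_dsym // IHl // big_cons -mulrA.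
rewrite -[i :: nu]cat1s topart_catr.
congr (_ * (_ * p@_ _)); apply: perm_topart.
by apply/permPl; exact: (perm_catCA l [:: i]).
Qed.

Lemma dsym_dseq i l p : dsym i (dseq l p) = dseq l (dsym i p).
Proof. by elim: l => [|j l IHl] //=; rewrite dsymC IHl. Qed.

End SymmetricDerivative.

(** * Specialization and the Taylor formula for the shift *)

Section Evaluation.
Variable R : realType.
Local Notation C := R[i].
Implicit Types (p q : Lam R) (la mu : partition) (ys : seq C).

Definition orbit_sum (t : seq nat) ys : C :=
  \sum_(al <- permutations t) \prod_(j < size ys) ys`_j ^+ nth 0%N al j.

Lemma m_evalE la ys : m_eval la ys =
  if (size la <= size ys)%N then orbit_sum (la ++ nseq (size ys - size la) 0%N) ys else 0.
Proof. by []. Qed.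

Lemma perm_orbit_sum (s t : seq nat) ys : perm_eq s t -> orbit_sum s ys = orbit_sum t ys.
Proof. by move=> st; apply/perm_big/perm_permutations. Qed.

Lemma orbit_sum_cons (t : seq nat) (a : C) ys : (0 < size t)%N ->
  orbit_sum t (a :: ys) = \sum_(x <- undup t) a ^+ x * orbit_sum (rem x t) ys.
Proof.
move=> t_gt0; rewrite /orbit_sum (perm_big _ (permutationsE t_gt0)) big_allpairs_dep.
apply: eq_bigr => x _; rewrite mulr_sumr; apply: eq_bigr => al _.
by rewrite /= big_ord_recl; congr (_ * _); apply: eq_bigr => j _; rewrite lift0.
Qed.

Lemma orbit_sum_rem la (x : nat) ys : x \in pval la -> (size la <= (size ys).+1)%N ->
  orbit_sum (rem x la ++ nseq ((size ys).+1 - size la) 0%N) ys =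
  m_eval (topart (rem x la)) ys.
Proof.
move=> x_la la_fits; rewrite m_evalE size_topart_rem //.
have la_gt0 : (0 < size la)%N by case: (pval la) x_la.
rewrite -ltnS prednK // la_fits -subn1 subnBA // addn1; apply: perm_orbit_sum.
rewrite perm_cat2r perm_sym perm_topart_pos //.
by apply/allP => y /mem_rem /(allP (part_pos la)).
Qed.

Lemma m_eval_cons la (a : C) ys : m_eval la (a :: ys) =
  m_eval la ys + \sum_(x <- undup la) a ^+ x * m_eval (topart (rem x la)) ys.
Proof.
rewrite {1}m_evalE /=; case: leqP => [la_fits | too_long]; last first.
  rewrite m_evalE leqNgt ltnW //= add0r big1_seq // => x /andP[_].
  rewrite mem_undup => x_la; rewrite m_evalE size_topart_rem // leqNgt -ltnS.
  by rewrite prednK ?too_long ?mulr0 //; case: (pval la) x_la.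
set k := ((size ys).+1 - size la)%N.
have t_gt0 : (0 < size (pval la ++ nseq k 0))%N by rewrite size_cat size_nseq subnKC.
rewrite orbit_sum_cons // undup_cat big_cat addrC /=; congr (_ + _).
  rewrite (all_filterP _); last first.
    apply/allP => x; rewrite mem_undup mem_nseq => /(allP (part_pos la)) /gtn_eqF.
    by rewrite andbC => ->.
  apply: eq_big_seq => x; rewrite mem_undup => x_la.
  by rewrite rem_cat x_la orbit_sum_rem.
(* The padding zeros give the term x = 0, present iff [la] fits into [ys]. *)
rewrite m_evalE; case Ek : k => [|k'].
  by rewrite big_nil leqNgt -subn_eq0 -/k Ek.
have [la_le k'E] : (size la <= size ys /\ size ys - size la = k')%N.
  by move: Ek; rewrite /k; lia.
by rewrite undup_nseqS big_seq1 expr0 mul1r rem_cat (negPf (part_neq0 la)) /= la_le k'E.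
Qed.

Lemma m_eval_nil la : m_eval la ([::] : seq C) = (la == part0)%:R.
Proof.
rewrite m_evalE /= leqn0 size_eq0; have [la0 | la_neq0] := eqVneq la part0.
  by rewrite la0 /orbit_sum /= big_seq1 big_ord0.
by rewrite ifN //; apply: contra la_neq0 => /eqP la_nil; apply/eqP/val_inj.
Qed.

Lemma evE p ys : ev p ys = mmap idfun (fun la => m_eval la ys) p.
Proof. by []. Qed.

Lemma evD p q ys : ev (p + q) ys = ev p ys + ev q ys.
Proof. by rewrite !evE raddfD. Qed.

Lemma evZ (c : C) p ys : ev (c *: p) ys = c * ev p ys.
Proof.
rewrite !evE (mmapEw (msuppZ_le c p)) mmapE mulr_sumr.
by apply: eq_bigr => la _; rewrite mcoeffZ mulrA.
Qed.

Lemma ev_sum (I : Type) (r : seq I) (F : I -> Lam R) ys :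
  ev (\sum_(x <- r) F x) ys = \sum_(x <- r) ev (F x) ys.
Proof. by rewrite evE raddf_sum. Qed.

Lemma evU la ys : ev << la >> ys = m_eval la ys.
Proof. by rewrite evE mmapU mul1r. Qed.

Lemma ev_nil p : ev p [::] = p@_part0.
Proof.
rewrite (mcoeff_supp p); apply: eq_bigr => la _.
by rewrite m_eval_nil.
Qed.

Lemma ev_dsym i p ys : ev (dsym i p) ys = i`!%:R *
  \sum_(la <- msupp p) p@_la * (if i \in pval la then m_eval (topart (rem i la)) ys else 0).
Proof.
rewrite -DsymE ev_sum mulr_sumr; apply: eq_bigr => la _.
rewrite evZ (fun_if (fun q => ev q ys)) evU evE raddf0 mulrAC mulrC.
by case: ifP.
Qed.

Definition dbound p : nat := \max_(la <- msupp p) (sumn la).+1.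

Lemma sumn_lt_dbound p la : la \in msupp p -> (sumn la < dbound p)%N.
Proof. by move=> la_p; exact: (leq_bigmax_seq (F := fun la : partition => (sumn la).+1)). Qed.

Lemma part_lt_dbound p la (x : nat) :
  la \in msupp p -> x \in pval la -> (x < dbound p)%N.
Proof. by move=> la_p /leq_mem_sumn /leq_ltn_trans; apply; apply: sumn_lt_dbound. Qed.

Lemma dbound_le p (n : nat) : {in msupp p, forall la, sumn la < n}%N -> (dbound p <= n)%N.
Proof. by move=> lt_n; apply/bigmax_leqP_seq => la la_p _; apply: lt_n. Qed.

Lemma ev_cons p (a : C) ys (N : nat) : (dbound p <= N)%N ->
  ev p (a :: ys) = ev p ys + \sum_(i < N) a ^+ i / i`!%:R * ev (dsym i p) ys.
Proof.
move=> le_pN; under eq_bigr => i _.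
  rewrite ev_dsym mulrA divfK ?fact_neq0 // mulr_sumr.
  under eq_bigr => la _ do rewrite mulrCA.
  over.
rewrite exchange_big /= /ev -big_split /=; apply: eq_big_seq => la la_p.
rewrite m_eval_cons mulrDr -mulr_sumr (@sum_undup_iota _ _ N) ?big_mkcond /=.
  by congr (_ + _ * _); apply: eq_bigr => i _; case: ifP; rewrite ?mulr0.
by move=> x x_la; apply: leq_trans le_pN; apply: part_lt_dbound la_p x_la.
Qed.

Lemma sumn_topart_cons (i : nat) la : (0 < i)%N ->
  sumn (topart (i :: la)) = (i + sumn la)%N.
Proof. by move=> i_gt0; rewrite (perm_sumn (perm_topart_pos _)) //= i_gt0 part_pos. Qed.

Lemma dbound_dsym i q : (0 < i)%N -> (dbound (dsym i q) <= (dbound q).-1)%N.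
Proof.
move=> i_gt0; apply: dbound_le => nu; rewrite -mcoeff_neq0 mcoeff_dsym // mulf_eq0 negb_or.
by case/andP=> _; rewrite mcoeff_neq0 => /sumn_lt_dbound; rewrite sumn_topart_cons //; lia.
Qed.

Lemma ev_dsym_eq0 q : (forall ys, ev q ys = 0) -> forall i ys, ev (dsym i q) ys = 0.
Proof.
move=> q_ev i ys; pose N := maxn (dbound q) i.+1.
pose x j := ev (dsym j q) ys / j`!%:R.
have vanish (a : C) : \sum_(j < N) x j * a ^+ j = 0.
  have := ev_cons a ys (leq_maxl (dbound q) i.+1); rewrite !q_ev add0r => sum0.
  by rewrite [RHS]sum0; apply: eq_bigr => j _; rewrite mulrC mulrA mulrAC.
have /eqP := sum_expr_eq0 vanish (leq_maxr (dbound q) i.+1).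
by rewrite mulf_eq0 invr_eq0 (negPf (fact_neq0 i)) orbF => /eqP.
Qed.

Lemma mcoeff_dsym_eq0 q la : (forall i, (0 < i)%N -> dsym i q = 0) -> la != part0 ->
  q@_la = 0.
Proof.
move=> dsym_q0 la_neq0; have [i i_la] : exists i, i \in pval la.
  by case: la la_neq0 => -[|i s] // la_part _; exists i; rewrite mem_head.
have i_gt0 := allP (part_pos la) i i_la.
have la_eq : topart (i :: topart (rem i la)) = la.
  by apply/esym/eqP; rewrite -topart_cons_rem // i_la eqxx.
have /eqP := congr1 (mcoeff (topart (rem i la))) (dsym_q0 i i_gt0).
by rewrite mcoeff_dsym // mcoeff0 la_eq mulf_eq0 (negPf (fact_neq0 i)) => /eqP.
Qed.

Lemma ev_eq0 q : (forall ys, ev q ys = 0) -> q = 0.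
Proof.
move: {2}(dbound q) (leqnn (dbound q)) => n; elim: n q => [|n IHn] q le_qn q_ev.
  apply/malgP => la; rewrite mcoeff0 mcoeff_outdom //; apply/negP => /sumn_lt_dbound.
  by rewrite ltnNge (leq_trans le_qn).
apply/malgP => la; rewrite mcoeff0; have [-> | la_neq0] := eqVneq la part0.
  by rewrite -ev_nil q_ev.
apply: mcoeff_dsym_eq0 la_neq0 => i i_gt0; apply: IHn (ev_dsym_eq0 q_ev i).
by have := dbound_dsym q i_gt0; lia.
Qed.

Lemma EshiftE (a : C) p (N : nat) : (dbound p <= N)%N ->
  Eshift a p = p + \sum_(i < N) (a ^+ i / i`!%:R) *: dsym i p.
Proof.
move=> le_pN; set q := (X in _ = X).
have q_spec ys : ev q ys = ev p (a :: ys).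
  rewrite evD ev_sum (ev_cons a ys le_pN); congr (_ + _).
  by apply: eq_bigr => i _; rewrite evZ.
have Eshift_spec : forall ys, ev (Eshift a p) ys = ev p (a :: ys).
  pose shifted r := forall ys, ev r ys = ev p (a :: ys).
  exact: (epsilon_spec (inhabits 0) shifted (ex_intro _ q q_spec)).
apply/eqP; rewrite -subr_eq0; apply/eqP/ev_eq0 => ys.
by rewrite evD -scaleN1r evZ Eshift_spec q_spec mulN1r subrr.
Qed.

End Evaluation.

Section CommutingOperators.
Variable R : realType.
Local Notation C := R[i].
Variable theta : Lam R -> Lam R.
Hypothesis theta_lin : linear theta.

HB.instance Definition _ := GRing.isLinear.Build C (Lam R) (Lam R) *:%R theta theta_lin.

Lemma Eshift_commute_dsym :
  (forall (a : C) p, Eshift a (theta p) = theta (Eshift a p)) <->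
  (forall i p, dsym i (theta p) = theta (dsym i p)).
Proof.
split=> [comm_E i p | comm_D a p]; last first.
  pose N := maxn (dbound (theta p)) (dbound p).
  rewrite (EshiftE a (leq_maxl _ _ : dbound (theta p) <= N)%N).
  rewrite (EshiftE a (leq_maxr _ _ : dbound p <= N)%N) linearD linear_sum.
  by congr (_ + _); apply: eq_bigr => j _; rewrite linearZ comm_D.
have [->|i_gt0] := posnP i; first by rewrite !dsym0 linear0.
pose N := maxn (maxn (dbound (theta p)) (dbound p)) i.+1.
have le_thetaN : (dbound (theta p) <= N)%N by rewrite !leq_max leqnn.
have le_pN : (dbound p <= N)%N by rewrite !leq_max leqnn orbT.
pose v j := j`!%:R^-1 *: (dsym j (theta p) - theta (dsym j p)).
have vanish (a : C) : \sum_(j < N) a ^+ j *: v j = 0.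
  have := comm_E a p; rewrite (EshiftE a le_thetaN) (EshiftE a le_pN) linearD linear_sum.
  move=> /addrI/eqP; rewrite -subr_eq0 -sumrB => /eqP sum0; rewrite -[RHS]sum0.
  by apply: eq_bigr => j _; rewrite /v scalerA mulrC /= linearZ scalerBr.
have /eqP := sum_scale_expr_eq0 vanish (leq_maxr _ i.+1 : i < N)%N.
by rewrite scaler_eq0 invr_eq0 (negPf (fact_neq0 i)) subr_eq0 => /eqP.
Qed.

End CommutingOperators.

(** * Multiplicity sequences *)

Definition mult_seq (k : seq nat) : seq nat :=
  flatten [seq nseq kj.2 kj.1 | kj <- zip (iota 1 (size k)) k].

Lemma count_mult_seq (x : nat) (k : seq nat) :
  count_mem x (mult_seq k) = if (0 < x)%N then nth 0%N k x.-1 else 0%N.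
Proof.
suff count_from m : count_mem x (flatten [seq nseq kj.2 kj.1 | kj <- zip (iota m (size k)) k])
    = if (m <= x)%N then nth 0%N k (x - m) else 0%N by rewrite count_from subn1.
elim: k m => [|y k IHk] m /=; first by case: ifP; rewrite ?nth_nil.
rewrite count_cat IHk count_nseq /=; case: (ltngtP m x) => [lt_mx | lt_xm | <-].
- by rewrite add0n -(subnSK lt_mx).
- by [].
- by rewrite subnn mul1n addn0.
Qed.

Lemma mult_seq_pos (k : seq nat) : all pos (mult_seq k).
Proof.
apply/allP => x x_k; rewrite lt0n; apply: contraTneq x_k => ->.
by rewrite -has_pred1 has_count count_mult_seq.
Qed.

Definition part_of_mult (k : seq nat) : partition := topart (mult_seq k).

Definition mult_of_part (la : partition) : seq nat :=
  mkseq (fun j => count_mem j.+1 la) (head 0%N la).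

Lemma canonE (k : seq nat) : k != [::] -> canon k = (nth 0%N k (size k).-1 != 0%N).
Proof. by case: k => [|x s] //= _; rewrite /canon nth_last. Qed.

Lemma part_of_mult_inj (k1 k2 : seq nat) : canon k1 -> canon k2 ->
  part_of_mult k1 = part_of_mult k2 -> k1 = k2.
Proof.
move=> k1_canon k2_canon eq_part.
have perm_k12 : perm_eq (mult_seq k1) (mult_seq k2).
  apply: (perm_trans _ (perm_topart_pos (mult_seq_pos k2))).
  by rewrite -/(part_of_mult k2) -eq_part perm_sym perm_topart_pos ?mult_seq_pos.
have eq_nth j : nth 0%N k1 j = nth 0%N k2 j.
  by move/permP: perm_k12 => /(_ (pred1 j.+1)); rewrite !count_mult_seq.
suff eq_size : size k1 = size k2 by apply: (eq_from_nth (x0 := 0%N) eq_size) => j _.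
wlog lt_k12 : k1 k2 k1_canon k2_canon {eq_part perm_k12} eq_nth / (size k1 < size k2)%N.
  move=> wlog_lt; case: (ltngtP (size k1) (size k2)) => // lt_sizes.
    exact: wlog_lt.
  by apply/esym/wlog_lt.
have k2_neq_nil : k2 != [::] by case: k2 lt_k12 {k2_canon eq_nth}.
move: k2_canon; rewrite canonE // -eq_nth nth_default //.
by rewrite -ltnS prednK ?(leq_ltn_trans _ lt_k12).
Qed.

Lemma part_le_head (la : partition) (x : nat) : x \in pval la -> (x <= head 0%N la)%N.
Proof.
have := part_sorted la; case: (pval la) => [|y s] //= sorted_ys.
rewrite in_cons => /orP[/eqP -> // | x_s].
have /allP := order_path_min (fun _ _ _ le_yx le_zy => leq_trans le_zy le_yx) sorted_ys.
by apply.
Qed.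

Lemma count_mult_of_part (la : partition) (x : nat) :
  count_mem x (mult_seq (mult_of_part la)) = count_mem x la.
Proof.
have count0 y : y \notin pval la -> count_mem y la = 0%N by move/count_memPn.
rewrite count_mult_seq; case: x => [|x] /=; first by rewrite count0 ?part_neq0.
case: (ltnP x (head 0%N la)) => [lt_x_head | le_head_x]; first by rewrite nth_mkseq.
rewrite nth_default ?size_mkseq // count0 //; apply: contraL le_head_x => /part_le_head.
by rewrite -ltnNge.
Qed.

Lemma mult_of_partK (la : partition) : part_of_mult (mult_of_part la) = la.
Proof.
apply: topart_eq; rewrite (all_filterP (mult_seq_pos _)).
by apply/allP => x _; rewrite /= count_mult_of_part.
Qed.

Lemma canon_mult_of_part (la : partition) : canon (mult_of_part la).
Proof.
rewrite /mult_of_part; case Ela: (pval la) => [|y s] //=.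
have y_gt0 : (0 < y)%N by apply: (allP (part_pos la)); rewrite Ela mem_head.
rewrite canonE -?size_eq0 size_mkseq -?lt0n // nth_mkseq ?prednK //.
by rewrite eqxx.
Qed.

Fixpoint bounded_seqs (B n : nat) : seq (seq nat) :=
  if n is n'.+1 then [::] :: [seq x :: t | x <- iota 0 B.+1, t <- bounded_seqs B n']
  else [:: [::]].

Lemma mem_bounded_seqs (B n : nat) (t : seq nat) :
  (size t <= n)%N -> all (fun x => x <= B)%N t -> t \in bounded_seqs B n.
Proof.
elim: n t => [|n IHn] [|x t] //; try by rewrite mem_head.
move=> le_tn /andP[le_xB le_tB]; rewrite in_cons; apply/orP; right; apply: allpairs_f.
  by rewrite mem_iota ltnS le_xB.
exact: IHn.
Qed.

Section IteratedDerivatives.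
Variable R : realType.
Implicit Types (p q : Lam R).

Lemma Dpow_dseq (k : seq nat) p : Dpow k p = dseq (mult_seq k) p.
Proof.
rewrite /Dpow /dseq /mult_seq DsymE; elim: (zip _ _) => [|kj z IHz] //=.
by rewrite foldr_cat -IHz; elim: kj.2 => //= n ->.
Qed.

Lemma mcoeff_Dpow (k : seq nat) p (nu : partition) :
  (Dpow k p)@_nu = (\prod_(i <- mult_seq k) i`!%:R) * p@_(topart (mult_seq k ++ nu)).
Proof. by rewrite Dpow_dseq mcoeff_dseq ?mult_seq_pos. Qed.

Lemma dsym_Dpow (i : nat) (k : seq nat) p : dsym i (Dpow k p) = Dpow k (dsym i p).
Proof. by rewrite !Dpow_dseq dsym_dseq. Qed.

Lemma Dpow_neq0_bounded (k : seq nat) p : canon k -> Dpow k p != 0 ->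
  k \in bounded_seqs (dbound p) (dbound p).
Proof.
move=> k_canon /msupp_neq0[nu]; rewrite -mcoeff_neq0 mcoeff_Dpow.
rewrite mulf_eq0 negb_or => /andP[_]; rewrite mcoeff_neq0 => /sumn_lt_dbound.
rewrite (perm_sumn (perm_topart_pos _)) ?all_cat ?mult_seq_pos ?part_pos // sumn_cat.
move=> /(leq_ltn_trans (leq_addr _ _)) lt_sumn_B.
have le_sumn_B (x : nat) : (x <= sumn (mult_seq k))%N -> (x <= dbound p)%N.
  by move=> /leq_ltn_trans/(_ lt_sumn_B)/ltnW.
apply: mem_bounded_seqs.
  have [-> // | k_neq0] := eqVneq k [::]; apply/le_sumn_B/leq_mem_sumn.
  have size_gt0 : (0 < size k)%N by rewrite lt0n size_eq0.
  by rewrite -has_pred1 has_count count_mult_seq size_gt0 lt0n -canonE.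
apply/allP => _ /(nthP 0%N)[j _ <-]; apply/le_sumn_B.
have := count_mult_seq j.+1 k; rewrite /= => <-.
exact: leq_trans (count_size _ _) (leq_size_sumn (mult_seq_pos k)).
Qed.

End IteratedDerivatives.

(** * Series in the symmetric derivatives *)

Definition is_Dseries (R : realType) (theta : Lam R -> Lam R) (c : seq nat -> R[i]) :
  Prop :=
  forall p : Lam R, exists s : seq (seq nat),
    [/\ uniq s, all canon s,
        (forall k, canon k -> c k *: Dpow k p != 0 -> k \in s) &
        theta p = \sum_(k <- s) c k *: Dpow k p].

Section DerivativeSeries.
Variable R : realType.
Local Notation C := R[i].
Variable theta : Lam R -> Lam R.
Hypothesis theta_lin : linear theta.

HB.instance Definition _ := GRing.isLinear.Build C (Lam R) (Lam R) *:%R theta theta_lin.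

Implicit Types (p : Lam R) (la mu : partition).

Lemma Dseries_commute_dsym (c : seq nat -> C) : is_Dseries theta c ->
  forall i p, dsym i (theta p) = theta (dsym i p).
Proof.
move=> theta_series i p.
have [s [s_uniq s_canon s_full ->]] := theta_series p.
have [s' [s'_uniq s'_canon s'_full ->]] := theta_series (dsym i p).
rewrite linear_sum; under eq_bigr => k _ do rewrite linearZ /= dsym_Dpow.
apply: eq_big_nz_seq => // k k_s term_neq0.
  by apply: s'_full => //; apply: (allP s_canon).
apply: s_full; first exact: (allP s'_canon).
by apply: contraNneq term_neq0 => term0; rewrite -dsym_Dpow -linearZ term0 linear0.
Qed.

Section Expansion.
Hypothesis theta_dsym : forall i p, dsym i (theta p) = theta (dsym i p).

Lemma dseq_commute (l : seq nat) p : dseq l (theta p) = theta (dseq l p).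
Proof. by elim: l => [|i l IHl] //=; rewrite IHl theta_dsym. Qed.

Lemma mcoeff_theta p mu : (theta p)@_mu =
  \sum_(la <- msupp (dseq mu p)) p@_(topart (la ++ mu)) * (theta << la >>)@_part0.
Proof.
have := mcoeff_dseq (theta p) part0 (part_pos mu).
rewrite cats0 topartK dseq_commute {1}[dseq mu p]monalgE linear_sum raddf_sum => mu_coef.
apply: (mulfI (prod_fact_neq0 mu)); rewrite -mu_coef mulr_sumr; apply: eq_bigr => la _ /=.
by rewrite monalgUZ linearZ mcoeffZ mcoeff_dseq ?part_pos // -mulrA topart_catC.
Qed.

Definition dcoef (k : seq nat) : C :=
  (theta << part_of_mult k >>)@_part0 / \prod_(i <- mult_seq k) i`!%:R.

Lemma mcoeff_dcoef_Dpow (k : seq nat) p mu : (dcoef k *: Dpow k p)@_mu =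
  p@_(topart (part_of_mult k ++ mu)) * (theta << part_of_mult k >>)@_part0.
Proof.
rewrite mcoeffZ mcoeff_Dpow /dcoef topart_catl mulrA divfK ?prod_fact_neq0 //.
exact: mulrC.
Qed.

Lemma Dseries_dcoef : is_Dseries theta dcoef.
Proof.
move=> p; pose B := dbound p.
pose s := undup [seq k <- bounded_seqs B B | canon k && (dcoef k *: Dpow k p != 0)].
have mem_s k : (k \in s) = canon k && (dcoef k *: Dpow k p != 0).
  rewrite mem_undup mem_filter andb_idr // => /andP[k_canon term_neq0].
  by apply: Dpow_neq0_bounded k_canon _; apply: contraNneq term_neq0 => ->; rewrite scaler0.
exists s; split.
- exact: undup_uniq.
- by apply/allP => k; rewrite mem_s => /andP[].
- by move=> k k_canon term_neq0; rewrite mem_s k_canon.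
apply/malgP => mu; rewrite mcoeff_theta raddf_sum /=.
pose F la := p@_(topart (la ++ mu)) * (theta << la >>)@_part0.
rewrite (eq_big_seq (fun k => F (part_of_mult k))) => [|k _]; last exact: mcoeff_dcoef_Dpow.
rewrite -(big_map _ xpredT); apply: eq_big_nz_seq.
- exact: fset_uniq.
- rewrite map_inj_in_uniq ?undup_uniq // => k1 k2.
  rewrite !mem_s => /andP[k1_canon _] /andP[k2_canon _]; exact: part_of_mult_inj.
- move=> la _ F_neq0; rewrite -[la]mult_of_partK map_f // mem_s canon_mult_of_part /=.
  apply: contraNneq F_neq0 => term0.
  by rewrite /F -{1 2}[la]mult_of_partK -mcoeff_dcoef_Dpow term0 mcoeff0.
- move=> la _; rewrite /F mulf_eq0 negb_or => /andP[p_neq0 _].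
  rewrite -mcoeff_neq0 mcoeff_dseq ?part_pos //.
  by rewrite mulf_neq0 ?prod_fact_neq0 // topart_catC.
Qed.

End Expansion.
End DerivativeSeries.

Theorem mainTheorem7 (R : realType) (theta : Lam R -> Lam R)
  (htheta : linear theta) :
  (forall (a : R[i]) (p : Lam R), Eshift a (theta p) = theta (Eshift a p)) <->
  exists c : seq nat -> R[i],
    forall p : Lam R, exists s : seq (seq nat),
      [/\ uniq s, all canon s,
          (forall k, canon k -> c k *: Dpow k p != 0 -> k \in s) &
          theta p = \sum_(k <- s) c k *: Dpow k p].
Proof.
rewrite (Eshift_commute_dsym htheta); split=> [theta_dsym | [c theta_series]].
  by exists (dcoef theta); exact: Dseries_dcoef.
exact: Dseries_commute_dsym theta_series.
Qed.
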